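(* Let $G=(V\cup\{O\},E)$ be a connected, unweighted, undirected graph, where $V$ is a set of $n$ terminals and $O\notin V$ is the depot, and let $k\in[1,n]$ be an integer tour capacity. Let $\mathrm{OPT}$ be an optimal solution to the graphic CVRP on this instance, let $T=z_1z_2\dots z_p$ be a tour in $\mathrm{OPT}$, let $U\subseteq V$ be the (nonempty) set of terminals whose demands are covered by $T$, and let $D=\sum_{v\in U}\mathrm{dist}(v)$. Then \[ \mathrm{cost}(T)\geq \frac{2D}{|U|}+\frac{|U|}{2}-\frac{1}{2|U|}. \]
   Context: For $v\in V$, $\mathrm{dist}(v)$ is the number of edges on a shortest $v$-to-$O$ path in $G$. A tour is a walk $z_1z_2\dots z_p$ in $G$ with $z_1=z_p=O$ and $(z_i,z_{i+1})\in E$ for all $i\in[1,p-1]$; its cost $\mathrm{cost}(T)$ is $p-1$. In the graphic CVRP, each terminal has unit demand; a feasible solution is a set of tours together with an assignment of each terminal to exactly one tour that visits it (that tour covers its demand), such that each tour covers at most $k$ terminals. The cost of a solution is the total cost of its tours; an optimal solution is a feasible solution of minimum cost. *)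

From mathcomp Require Import all_boot all_order all_algebra.
Set Implicit Arguments. Unset Strict Implicit. Unset Printing Implicit Defensive.

(* The graph is G = (T, e) with T a finite type of vertices,
   e a symmetric irreflexive (simple, undirected, unweighted) edge relation,
   O : T the depot; the terminals V are all the vertices other than O. *)

Section CVRP.
Variables (T : finType) (e : rel T) (O : T).

Definition terminals : {set T} := [set v | v != O].

Definition walk_of_len (v : T) (d : nat) : bool :=
  [exists p : d.-tuple T, path e v p && (last v p == O)].

(* dist v = number of edges on a shortest v-to-O path; in a connected graph
   this is < #|T|, so it is the least d in [0, #|T|) with such a walk
   (find on iota 0 #|T| returns exactly that d). *)
Definition dist (v : T) : nat := find (walk_of_len v) (iota 0 #|T|).

Definition is_tour (s : seq T) : bool :=
  if s is z :: s' then [&& z == O, path e z s' & last z s' == O] else false.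

Definition tour_cost (s : seq T) : nat := (size s).-1.

Definition covered (asg : T -> nat) (i : nat) : {set T} :=
  [set v in terminals | asg v == i].

Definition feasible (k : nat) (tours : seq (seq T)) (asg : T -> nat) : Prop :=
  [/\ all is_tour tours,
      (forall v, v \in terminals ->
         asg v < size tours /\ v \in nth [::] tours (asg v))
    & (forall i, i < size tours -> #|covered asg i| <= k)].

Definition sol_cost (tours : seq (seq T)) : nat := sumn (map tour_cost tours).

Definition optimal (k : nat) (tours : seq (seq T)) (asg : T -> nat) : Prop :=
  feasible k tours asg /\
  forall tours' asg', feasible k tours' asg' -> sol_cost tours <= sol_cost tours'.

End CVRP.

From mathcomp Require Import all_boot all_order all_algebra zify ring.
Import Order.TTheory GRing.Theory Num.Theory.
Set Implicit Arguments. Unset Strict Implicit. Unset Printing Implicit Defensive.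

(* A terminal at position j of a tour of cost c can reach the depot along
   either end of the tour, so its distance is at most min(j, c - j).  The
   terminals of U sit at distinct positions of the tour; removing the first
   and the last of them loses at most c - (|U| - 1) of distance and leaves
   |U| - 2 terminals, whence 4 D + |U|^2 <= 2 |U| c + 1 by induction, which
   is the claimed bound after division by 2 |U|. *)

Lemma card_le_span n (S : {set 'I_n}) a b :
  {in S, forall j : 'I_n, a <= j <= b} -> #|S| <= b.+1 - a.
Proof.
move=> S_span; rewrite cardE -(size_map (@nat_of_ord n)) -(size_iota a (b.+1 - a)).
apply: uniq_leq_size; first by rewrite (map_inj_uniq (@ord_inj n)) enum_uniq.
move=> x /mapP[j]; rewrite mem_enum => /S_span jS ->.
by rewrite mem_iota; lia.
Qed.

Lemma sum_minn_dist_ends c (S : {set 'I_c.+1}) :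
  4 * \sum_(j in S) minn j (c - j) + #|S| ^ 2 <= 2 * #|S| * c + 1.
Proof.
have [m] := ubnP #|S|; elim: m S => // m IH S /ltnSE S_le_m.
have [S_le1 | S_gt1] := leqP #|S| 1.
  have [-> | [x ->]] : S = set0 \/ exists x, S = [set x].
    move: S_le1; rewrite leq_eqVlt ltnS leqn0 cards_eq0 orbC.
    by case/orP=> [/eqP S0 | /cards1P S1]; [left | right].
  - by rewrite big_set0 cards0.
  - by rewrite big_set1 cards1; have := ltn_ord x; lia.
have [j0 j0S] : exists j0, j0 \in S by apply/set0Pn; rewrite -card_gt0; lia.
case: (arg_minnP (P := [in S]) (@nat_of_ord c.+1) j0S) => a aS a_min.
case: (arg_maxnP (P := [in S]) (@nat_of_ord c.+1) j0S) => b bS b_max.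
have S_span : #|S| <= b.+1 - a.
  by apply: card_le_span => j jS; rewrite a_min //; apply: b_max.
have ba : a != b by apply: contraTneq S_gt1 => ab; move: S_span; rewrite ab; lia.
have bSa : b \in S :\ a by rewrite !inE eq_sym ba.
rewrite (big_setD1 a aS) (big_setD1 b bSa) /=.
set S' := S :\ a :\ b.
have card_S : #|S| = #|S'|.+2 by rewrite (cardsD1 a S) aS (cardsD1 b) bSa.
have ends_le : minn a (c - a) + minn b (c - b) + #|S'| < c.
  by move: S_span; rewrite card_S; have := ltn_ord b; have := a_min b bS; lia.
have S'_lt_m : #|S'| < m by lia.
have := IH S' S'_lt_m; rewrite card_S.
by move: ends_le; move: #|S'| (\sum_(j in S') _) => u s; nia.
Qed.

Section Tours.
Variables (T : finType) (e : rel T) (O : T).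
Hypothesis e_sym : symmetric e.

Lemma dist_le_walk v d : walk_of_len e O v d -> dist e O v <= d.
Proof.
move=> walk_d; rewrite /dist; have [d_lt | d_ge] := ltnP d #|T|; last first.
  by apply: leq_trans (find_size _ _) _; rewrite size_iota.
rewrite leqNgt; apply/negP => /(before_find 0).
by rewrite nth_iota // add0n walk_d.
Qed.

Lemma walk_of_path x p : path e x p -> last x p = O -> walk_of_len e O x (size p).
Proof. by move=> ep lastO; apply/existsP; exists (in_tuple p); rewrite /= ep lastO eqxx. Qed.

Lemma dist_depot : dist e O O = 0.
Proof. by apply/eqP; rewrite -leqn0; apply: dist_le_walk (walk_of_path (p := [::]) _ _). Qed.

(* Default [O] in [nth] makes out-of-range positions harmless. *)
Lemma dist_nth_path_le x p j :
  path e x p -> last x p = O -> dist e O (nth O (x :: p) j) <= size p - j.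
Proof.
elim: p x j => [|y p IH] x [|j] /=.
- by move=> _ ->; rewrite dist_depot.
- by move=> _ _; rewrite nth_nil dist_depot.
- by move=> ep lastO; exact: dist_le_walk (@walk_of_path x (y :: p) ep lastO).
- by case/andP=> _ /IH; apply.
Qed.

Lemma dist_nth_tour_le t j : is_tour e O t -> dist e O (nth O t j) <= tour_cost t - j.
Proof. by case: t => // x p /and3P[_ ep /eqP]; apply: dist_nth_path_le. Qed.

Lemma is_tour_rev t : is_tour e O t -> is_tour e O (rev t).
Proof.
case: t => // x p /and3P[/eqP xO ep /eqP lastO].
rewrite lastI rev_rcons /= rev_path (eq_path (e' := e)) ?ep ?lastO ?eqxx; last first.
  by move=> ? ?; exact: e_sym.
by case: p {ep lastO} => [|y p] /=; rewrite ?rev_cons ?last_rcons ?xO eqxx.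
Qed.

Lemma dist_nth_tour_le_minn t j :
  is_tour e O t -> dist e O (nth O t j) <= minn j (tour_cost t - j).
Proof.
move=> tour_t; rewrite leq_min dist_nth_tour_le // andbT.
have [j_lt | j_ge] := ltnP j (size t); last first.
  by rewrite nth_default // dist_depot.
rewrite -[t]revK nth_rev size_rev //.
apply: leq_trans (dist_nth_tour_le _ (is_tour_rev tour_t)) _.
by rewrite /tour_cost size_rev; lia.
Qed.

Lemma sum_dist_tour_le t (U : {set T}) :
  is_tour e O t -> {subset U <= t} ->
  4 * \sum_(v in U) dist e O v + #|U| ^ 2 <= 2 * #|U| * tour_cost t + 1.
Proof.
move=> tour_t U_t; set c := tour_cost t.
have size_t : size t = c.+1 by rewrite /c /tour_cost prednK //; case: (t) tour_t.
pose pos v : 'I_c.+1 := inord (index v t).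
have posE v : v \in U -> pos v = index v t :> nat.
  by move=> /U_t; rewrite -index_mem size_t => /inordK.
have pos_inj : {in U &, injective pos}.
  move=> v w vU wU /(congr1 (@nat_of_ord _)); rewrite !posE //.
  exact: index_inj (U_t v vU) (U_t w wU).
rewrite -(card_in_imset pos_inj).
apply: leq_trans (sum_minn_dist_ends (pos @: U)); rewrite big_imset //.
rewrite leq_add2r leq_mul2l; apply/orP; right; apply: leq_sum => v vU.
by rewrite posE // -{1}(nth_index O (U_t v vU)) dist_nth_tour_le_minn.
Qed.

End Tours.

Local Open Scope ring_scope.

Lemma ler_bound_of_quad_leqn (R : realFieldType) (d u c : nat) :
  (0 < u)%N -> (4 * d + u ^ 2 <= 2 * u * c + 1)%N ->
  2 * d%:R / u%:R + u%:R / 2 - 1 / (2 * u%:R) <= c%:R :> R.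
Proof.
move=> u_gt0 quad_le.
have -> : 2 * d%:R / u%:R + u%:R / 2 - 1 / (2 * u%:R)
          = (4 * d + u ^ 2 - 1)%N%:R / (2 * u)%N%:R :> R.
  rewrite natrB; last by lia.
  by rewrite natrD !natrM; field; rewrite pnatr_eq0 -lt0n.
by rewrite ler_pdivrMr ?ltr0n ?muln_gt0 // -natrM ler_nat; lia.
Qed.

Theorem mainTheorem3 (T : finType) (e : rel T) (O : T)
  (e_sym : symmetric e) (e_irr : irreflexive e)
  (e_conn : forall x y : T, connect e x y)
  (k : nat) (k_ge1 : (1 <= k)%N) (k_le_n : (k <= #|terminals O|)%N)
  (tours : seq (seq T)) (asg : T -> nat)
  (opt : optimal e O k tours asg)
  (i : nat) (i_lt : (i < size tours)%N)
  (U_nonempty : covered O asg i != set0) :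
  let t := nth [::] tours i in
  let U := covered O asg i in
  let D := (\sum_(v in U) dist e O v)%N in
  (2 * D%:R) / #|U|%:R + #|U|%:R / 2 - 1 / (2 * #|U|%:R)
    <= (tour_cost t)%:R :> rat.
Proof.
case: opt => [[/allP tours_ok covers _] _].
have tour_t : is_tour e O (nth [::] tours i) by apply: tours_ok; rewrite mem_nth.
have U_t : {subset covered O asg i <= nth [::] tours i}.
  by move=> v; rewrite inE => /andP[vV /eqP <-]; have [] := covers v vV.
apply: ler_bound_of_quad_leqn; first by rewrite card_gt0.
exact: sum_dist_tour_le.
Qed.
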